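(* Let $a,b\in\mathbb{R}^+\cup\{\infty\}$, $n\ge1$, $g\in C^1(\mathbb{R}^n,\mathbb{R}^n)$, and define $F:(-a,b)\times\mathbb{R}^n\to(-a,b)\times\mathbb{R}^n$ by $F(U,X)=(U,\,X+g(X)\,U_+)$, where $U_+=\max(U,0)$. Then there exists an open set $W$ containing $(-a,0]\times\mathbb{R}^n$ such that $F|_W$ is injective. *)

From Stdlib Require Import Reals.
From Stdlib Require Fin.
Open Scope R_scope.

Definition vec (n : nat) := Fin.t n -> R.

Definition basis {n : nat} (j : Fin.t n) : vec n :=
  fun i => if Fin.eqb i j then 1 else 0.

Definition vshift {n : nat} (x : vec n) (t : R) (v : vec n) : vec n :=
  fun i => x i + t * v i.

(* continuity of a real-valued function on R^n (Euclidean topology, via the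
   equivalent sup-distance balls) *)
Definition cont_vec {n : nat} (h : vec n -> R) : Prop :=
  forall x eps, 0 < eps -> exists delta, 0 < delta /\
    forall y, (forall i, Rabs (y i - x i) < delta) -> Rabs (h y - h x) < eps.

Definition C1_vec {n : nat} (g : vec n -> vec n) : Prop :=
  exists dg : Fin.t n -> Fin.t n -> vec n -> R,
    (forall i j x, derivable_pt_lim (fun t => g (vshift x t (basis j)) i) 0 (dg i j x))
    /\ (forall i j, cont_vec (dg i j)).

(* extended positive reals R^+ ∪ {∞}: None = ∞, Some a with 0 < a *)
Definition ext_pos (a : option R) : Prop :=
  match a with Some r => 0 < r | None => True end.

Definition in_interval (a b : option R) (u : R) : Prop :=
  (match a with Some r => - r < u | None => True end) /\
  (match b with Some r => u < r | None => True end).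

Definition open_RxRn {n : nat} (W : (R * vec n)%type -> Prop) : Prop :=
  forall p, W p -> exists eps, 0 < eps /\
    forall q : (R * vec n)%type, Rabs (fst q - fst p) < eps ->
      (forall i, Rabs (snd q i - snd p i) < eps) -> W q.

Definition Fmap {n : nat} (g : vec n -> vec n) (p : (R * vec n)%type) : (R * vec n)%type :=
  (fst p, fun i => snd p i + g (snd p) i * Rmax (fst p) 0).

(* For U <= 0 the map F is the identity in X. Around any X, g is C^1, hence
   Lipschitz (constant L) and bounded (by G) on a box; for U > 0 with U L < 1
   and U G small compared to the box, X |-> X + U g(X) is injective there and
   moves points only a little. W consists of the (U, X) admitting such a box
   with some room to spare, which makes W open and contain every U <= 0.
   If two points of W have the same image, each moved by less than a quarter
   of the larger box, so both lie in that box and the contraction estimate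
   |X - Y| <= U L |X - Y| forces X = Y. *)

From Stdlib Require Import Reals Lra Lia.
From Stdlib Require Fin.
From Stdlib Require Import FunctionalExtensionality.
Open Scope R_scope.

Lemma Rabs_le_iff (x r : R) : Rabs x <= r <-> - r <= x <= r.
Proof. unfold Rabs; destruct (Rcase_abs x); split; intros; lra. Qed.

Definition in_box {n} (c : vec n) (rad : R) (y : vec n) : Prop :=
  forall k, Rabs (y k - c k) <= rad.

Lemma in_box_center {n} (c : vec n) (rad : R) : 0 <= rad -> in_box c rad c.
Proof. intros Hrad k; unfold Rminus; rewrite Rplus_opp_r, Rabs_R0; exact Hrad. Qed.

Lemma in_box_weaken {n} (c y : vec n) (r r' : R) : r <= r' -> in_box c r y -> in_box c r' y.
Proof. intros Hr Hy k; specialize (Hy k); lra. Qed.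

Lemma in_box_trans {n} (c x y : vec n) (r s : R) :
  in_box c r x -> in_box x s y -> in_box c (r + s) y.
Proof.
  intros Hx Hy k; replace (y k - c k) with ((x k - c k) + (y k - x k)) by ring.
  eapply Rle_trans; [apply Rabs_triang|]; specialize (Hx k); specialize (Hy k); lra.
Qed.

Fixpoint fin_max {n : nat} : (Fin.t n -> R) -> R :=
  match n with
  | O => fun _ => 0
  | S m => fun f => Rmax (f Fin.F1) (fin_max (fun i => f (Fin.FS i)))
  end.

Lemma fin_max_ge {n} (f : Fin.t n -> R) (i : Fin.t n) : f i <= fin_max f.
Proof.
  induction i as [m|m i IH]; simpl; [apply Rmax_l|].
  eapply Rle_trans; [apply (IH (fun i => f (Fin.FS i)))|apply Rmax_r].
Qed.

Lemma fin_max_nonneg {n} (f : Fin.t n -> R) : 0 <= fin_max f.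
Proof.
  induction n as [|n IH]; simpl; [lra|].
  eapply Rle_trans; [apply (IH (fun i => f (Fin.FS i)))|apply Rmax_r].
Qed.

Lemma fin_max_le {n} (f : Fin.t n -> R) (B : R) :
  0 <= B -> (forall i, f i <= B) -> fin_max f <= B.
Proof.
  revert f; induction n as [|n IH]; intros f HB Hf; simpl; [lra|].
  apply Rmax_lub; [apply Hf|apply IH; auto].
Qed.

Lemma fin_common_radius (n : nat) (P : Fin.t n -> R -> Prop) :
  (forall i d d', P i d -> 0 < d' -> d' <= d -> P i d') ->
  (forall i, exists d, 0 < d /\ P i d) -> exists d, 0 < d /\ forall i, P i d.
Proof.
  induction n as [|n IH]; intros Hmono Hex.
  - exists 1; split; [lra|]. intro i; apply (Fin.case0 (fun i => P i 1) i).
  - destruct (IH (fun i d => P (Fin.FS i) d)) as [d1 [Hd1 H1]].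
    + intros; eapply Hmono; eauto.
    + intros; apply Hex.
    + destruct (Hex Fin.F1) as [d0 [Hd0 H0]].
      exists (Rmin d0 d1); split; [apply Rmin_pos; auto|].
      intro i; apply (Fin.caseS' i (fun i => P i (Rmin d0 d1))).
      * eapply Hmono; eauto; [apply Rmin_pos; auto|apply Rmin_l].
      * intro p; eapply Hmono; eauto; [apply Rmin_pos; auto|apply Rmin_r].
Qed.

Lemma Rmult_lt_stable (u c m : R) : 0 <= c -> u * c < m ->
  exists e, 0 < e /\ forall u', Rabs (u' - u) < e -> u' * c < m.
Proof.
  intros Hc H; exists ((m - u * c) / (c + 1)); split; [apply Rdiv_lt_0_compat; lra|].
  intros u' Hu'.
  assert (Hgap : Rabs (u' - u) * (c + 1) < m - u * c).
  { apply (Rmult_lt_compat_r (c + 1)) in Hu'; [|lra].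
    unfold Rdiv in Hu'; rewrite Rmult_assoc, Rinv_l, Rmult_1_r in Hu' by lra; exact Hu'. }
  assert ((u' - u) * c <= Rabs (u' - u) * c) by (apply Rmult_le_compat_r; [lra|apply Rle_abs]).
  pose proof (Rabs_pos (u' - u)); nra.
Qed.

Lemma in_interval_open (a b : option R) (u : R) : in_interval a b u ->
  exists e, 0 < e /\ forall u', Rabs (u' - u) < e -> in_interval a b u'.
Proof.
  intros [Ha Hb].
  destruct a as [ra|]; destruct b as [rb|].
  - exists (Rmin (u + ra) (rb - u)); split; [apply Rmin_pos; lra|].
    intros u' H; pose proof (Rmin_l (u + ra) (rb - u)); pose proof (Rmin_r (u + ra) (rb - u)).
    apply Rabs_def2 in H; split; simpl; lra.
  - exists (u + ra); split; [lra|]; intros u' H; apply Rabs_def2 in H; split; simpl; lra.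
  - exists (rb - u); split; [lra|]; intros u' H; apply Rabs_def2 in H; split; simpl; lra.
  - exists 1; split; [lra|]; intros; split; simpl; auto.
Qed.

Lemma vshift_vshift {n} (w : vec n) (t s : R) (e : vec n) :
  vshift (vshift w t e) s e = vshift w (t + s) e.
Proof. apply functional_extensionality; intro i; unfold vshift; ring. Qed.

Lemma in_box_vshift_basis {n} (c w : vec n) (rad t : R) (j : Fin.t n) :
  in_box c rad w -> Rabs (w j + t - c j) <= rad -> in_box c rad (vshift w t (basis j)).
Proof.
  intros Hw Hj l; unfold vshift, basis.
  destruct (Fin.eqb l j) eqn:E.
  - apply Fin.eqb_eq in E; subst l; rewrite Rmult_1_r; exact Hj.
  - rewrite Rmult_0_r, Rplus_0_r; apply Hw.
Qed.

Definition splice {n} (y z : vec n) (k : nat) : vec n :=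
  fun i => if Nat.ltb (proj1_sig (Fin.to_nat i)) k then y i else z i.

Lemma splice_0 {n} (y z : vec n) : splice y z 0 = z.
Proof. reflexivity. Qed.

Lemma splice_all {n} (y z : vec n) : splice y z n = y.
Proof.
  apply functional_extensionality; intro l; unfold splice.
  destruct (Fin.to_nat l) as [m Hm]; simpl.
  replace (Nat.ltb m n) with true by (symmetry; apply Nat.ltb_lt; lia); reflexivity.
Qed.

Lemma in_box_splice {n} (c y z : vec n) (rad : R) (k : nat) :
  in_box c rad y -> in_box c rad z -> in_box c rad (splice y z k).
Proof. intros Hy Hz l; unfold splice; destruct (Nat.ltb _ _); auto. Qed.

Lemma splice_at {n} (y z : vec n) (k : nat) (Hk : (k < n)%nat) :
  splice y z k (Fin.of_nat_lt Hk) = z (Fin.of_nat_lt Hk).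
Proof. unfold splice; rewrite Fin.to_nat_of_nat; simpl; rewrite Nat.ltb_irrefl; reflexivity. Qed.

Lemma splice_S {n} (y z : vec n) (k : nat) (Hk : (k < n)%nat) :
  let j := Fin.of_nat_lt Hk in
  splice y z (S k) = vshift (splice y z k) (y j - z j) (basis j).
Proof.
  intro j; apply functional_extensionality; intro l; unfold vshift, basis.
  destruct (Fin.eqb l j) eqn:E.
  - apply Fin.eqb_eq in E; subst l; unfold j; rewrite splice_at.
    unfold splice; rewrite Fin.to_nat_of_nat; simpl.
    replace (Nat.ltb k (S k)) with true by (symmetry; apply Nat.ltb_lt; lia); ring.
  - assert (Hne : proj1_sig (Fin.to_nat l) <> k).
    { intro Hc; assert (l = j) as ->.
      { apply Fin.to_nat_inj; unfold j; rewrite Fin.to_nat_of_nat; exact Hc. }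
      rewrite (proj2 (Fin.eqb_eq _ j j) eq_refl) in E; discriminate. }
    unfold splice; destruct (Nat.ltb_spec (proj1_sig (Fin.to_nat l)) (S k));
      destruct (Nat.ltb_spec (proj1_sig (Fin.to_nat l)) k); try lia; ring.
Qed.

Definition box_lipschitz {n} (g : vec n -> vec n) (c : vec n) (rad L : R) : Prop :=
  forall y z D, in_box c rad y -> in_box c rad z -> in_box z D y ->
    forall i, Rabs (g y i - g z i) <= L * D.

Section PartialDerivatives.

Variables (n : nat) (g : vec n -> vec n) (dg : Fin.t n -> Fin.t n -> vec n -> R).
Hypothesis dg_partial :
  forall i j x, derivable_pt_lim (fun t => g (vshift x t (basis j)) i) 0 (dg i j x).

Lemma partial_derivable_along (i j : Fin.t n) (w : vec n) (t : R) :
  derivable_pt_lim (fun s => g (vshift w s (basis j)) i) t (dg i j (vshift w t (basis j))).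
Proof.
  intros eps Heps; destruct (dg_partial i j (vshift w t (basis j)) eps Heps) as [delta Hdel].
  exists delta; intros h Hh Hhd; specialize (Hdel h Hh Hhd).
  rewrite !vshift_vshift, Rplus_0_l, Rplus_0_r in Hdel; exact Hdel.
Qed.

Lemma partial_increment_le (i j : Fin.t n) (w : vec n) (h M : R) :
  (forall t, Rmin 0 h <= t <= Rmax 0 h -> Rabs (dg i j (vshift w t (basis j))) <= M) ->
  Rabs (g (vshift w h (basis j)) i - g w i) <= M * Rabs h.
Proof.
  intro HM.
  destruct (MVT_abs (fun s => g (vshift w s (basis j)) i)
              (fun s => dg i j (vshift w s (basis j))) 0 h) as [t [Ht Hmid]].
  { intros t _; apply partial_derivable_along. }
  simpl in Ht; replace (vshift w 0 (basis j)) with w in Ht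
    by (apply functional_extensionality; intro l; unfold vshift; ring).
  rewrite Ht, Rminus_0_r; apply Rmult_le_compat_r; [apply Rabs_pos|auto].
Qed.

Lemma box_lipschitz_of_partials (c : vec n) (rad M : R) : 0 <= M ->
  (forall i j w, in_box c rad w -> Rabs (dg i j w) <= M) ->
  box_lipschitz g c rad (INR n * M).
Proof.
  intros HM0 HM y z D Hy Hz HD i.
  (* replace the coordinates of [z] by those of [y] one at a time *)
  assert (Hsplice : forall k, (k <= n)%nat ->
            Rabs (g (splice y z k) i - g z i) <= INR k * M * D).
  { induction k as [|k IH]; intro Hk.
    - rewrite splice_0; unfold Rminus; rewrite Rplus_opp_r, Rabs_R0; simpl; lra.
    - assert (Hkn : (k < n)%nat) by lia.
      set (j := Fin.of_nat_lt Hkn).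
      assert (Hstep : Rabs (g (vshift (splice y z k) (y j - z j) (basis j)) i
                            - g (splice y z k) i) <= M * Rabs (y j - z j)).
      { apply partial_increment_le; intros t Ht; apply HM, in_box_vshift_basis;
          [apply in_box_splice; auto|].
        unfold j; rewrite splice_at; fold j.
        pose proof (proj1 (Rabs_le_iff _ _) (Hy j)); pose proof (proj1 (Rabs_le_iff _ _) (Hz j)).
        unfold Rmin, Rmax in Ht; destruct (Rle_dec 0 (y j - z j));
          apply Rabs_le_iff; lra. }
      rewrite (splice_S y z k Hkn); fold j; rewrite S_INR.
      specialize (IH ltac:(lia)).
      assert (M * Rabs (y j - z j) <= M * D) by (apply Rmult_le_compat_l; auto).
      replace (g (vshift (splice y z k) (y j - z j) (basis j)) i - g z i) with
        ((g (vshift (splice y z k) (y j - z j) (basis j)) i - g (splice y z k) i)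
         + (g (splice y z k) i - g z i)) by ring.
      eapply Rle_trans; [apply Rabs_triang|]; lra. }
  rewrite <- (splice_all y z); apply Hsplice; lia.
Qed.

End PartialDerivatives.

Lemma C1_locally_lipschitz {n} (g : vec n -> vec n) : C1_vec g ->
  forall x, exists rad L, 0 < rad /\ 0 <= L /\ box_lipschitz g x rad L.
Proof.
  intros [dg [Hd Hc]] x.
  destruct (fin_common_radius n (fun i d => forall j w, in_box x d w ->
              Rabs (dg i j w - dg i j x) < 1)) as [rad [Hrad Hnear]].
  { intros i d d' H _ Hle j w Hw; apply H, (in_box_weaken _ _ d'); auto. }
  { intro i; apply (fin_common_radius n (fun j d => forall w, in_box x d w ->
                      Rabs (dg i j w - dg i j x) < 1)).
    - intros j d d' H _ Hle w Hw; apply H, (in_box_weaken _ _ d'); auto.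
    - intro j; destruct (Hc i j x 1 ltac:(lra)) as [delta [Hdelta Hball]].
      exists (delta / 2); split; [lra|].
      intros w Hw; apply Hball; intro k; specialize (Hw k); lra. }
  set (B := fin_max (fun i => fin_max (fun j => Rabs (dg i j x)))).
  assert (HB : 0 <= B) by apply fin_max_nonneg.
  exists rad, (INR n * (B + 1)); split; [exact Hrad|split].
  { apply Rmult_le_pos; [apply pos_INR|lra]. }
  apply (box_lipschitz_of_partials n g dg Hd); [lra|].
  intros i j w Hw.
  assert (Rabs (dg i j x) <= B).
  { eapply Rle_trans; [apply (fin_max_ge (fun j => Rabs (dg i j x)))|].
    apply (fin_max_ge (fun i => fin_max (fun j => Rabs (dg i j x)))). }
  specialize (Hnear i j w Hw).
  replace (dg i j w) with ((dg i j w - dg i j x) + dg i j x) by ring.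
  eapply Rle_trans; [apply Rabs_triang|]; lra.
Qed.

(* On the box of radius [2 rho] around [x0], [g] is [L]-Lipschitz and bounded
   by [G]; [x] sits well inside it, and [u] is small enough that
   [X + u g(X)] contracts differences and moves points by less than [rho / 4]. *)
Definition chart {n} (g : vec n -> vec n) (u : R) (x x0 : vec n) (r rho L G : R) : Prop :=
  0 <= r < rho /\ 0 <= L /\ 0 <= G /\ in_box x0 r x /\
  box_lipschitz g x0 (2 * rho) L /\
  (forall z, in_box x0 (2 * rho) z -> forall i, Rabs (g z i) <= G) /\
  u * L < 1 /\ u * (4 * G) < rho.

Lemma chart_open {n} (g : vec n -> vec n) u x x0 r rho L G :
  chart g u x x0 r rho L G ->
  exists e, 0 < e /\ forall u' x', Rabs (u' - u) < e -> in_box x e x' ->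
    chart g u' x' x0 ((r + rho) / 2) rho L G.
Proof.
  intros (Hr & HL & HG & Hx & Hlip & Hbound & HuL & HuG).
  destruct (Rmult_lt_stable u L 1 HL HuL) as [e1 [He1 H1]].
  destruct (Rmult_lt_stable u (4 * G) rho ltac:(lra) HuG) as [e2 [He2 H2]].
  exists (Rmin e1 (Rmin e2 ((rho - r) / 2))).
  pose proof (Rmin_l e1 (Rmin e2 ((rho - r) / 2))).
  pose proof (Rmin_r e1 (Rmin e2 ((rho - r) / 2))).
  pose proof (Rmin_l e2 ((rho - r) / 2)); pose proof (Rmin_r e2 ((rho - r) / 2)).
  split; [repeat apply Rmin_pos; lra|].
  intros u' x' Hu' Hx'.
  repeat split; auto; try lra.
  - apply (in_box_weaken _ _ (r + Rmin e1 (Rmin e2 ((rho - r) / 2)))); [lra|].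
    apply (in_box_trans _ x); auto.
  - apply H1; lra.
  - apply H2; lra.
Qed.

Lemma chart_at_nonpos {n} (g : vec n -> vec n) (u : R) (x : vec n) :
  C1_vec g -> u <= 0 -> exists x0 r rho L G, chart g u x x0 r rho L G.
Proof.
  intros HC Hu.
  destruct (C1_locally_lipschitz g HC x) as [rad [L [Hrad [HL Hlip]]]].
  set (B := fin_max (fun i => Rabs (g x i))).
  assert (HB : 0 <= B) by apply fin_max_nonneg.
  exists x, 0, (rad / 2), L, (B + L * rad).
  assert (0 <= L * rad) by (apply Rmult_le_pos; lra).
  unfold chart; replace (2 * (rad / 2)) with rad by field.
  repeat split; try lra; try nra.
  - apply in_box_center; lra.
  - exact Hlip.
  - intros z Hz i.
    pose proof (Hlip z x rad Hz (in_box_center x rad ltac:(lra)) Hz i).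
    assert (Rabs (g x i) <= B) by apply (fin_max_ge (fun i => Rabs (g x i))).
    replace (g z i) with ((g z i - g x i) + g x i) by ring.
    eapply Rle_trans; [apply Rabs_triang|]; lra.
Qed.

Lemma chart_injective {n} (g : vec n -> vec n) u x y x0 r rho L G y0 r' rho' L' G' :
  0 < u -> chart g u x x0 r rho L G -> chart g u y y0 r' rho' L' G' -> rho' <= rho ->
  (forall i, x i + g x i * u = y i + g y i * u) -> x = y.
Proof.
  intros Hu (Hr & HL & HG & Hx & Hlip & Hbound & HuL & HuG)
    (Hr' & HL' & HG' & Hy & _ & Hbound' & _ & HuG') Hrho Heq.
  assert (Hx2 : in_box x0 (2 * rho) x) by (apply (in_box_weaken _ _ r); auto; lra).
  assert (Hdiff : forall i, Rabs (y i - x i) = u * Rabs (g y i - g x i)).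
  { intro i; replace (y i - x i) with (u * - (g y i - g x i)) by (specialize (Heq i); lra).
    rewrite Rabs_mult, Rabs_Ropp, Rabs_pos_eq; lra. }
  assert (Hclose : in_box x (rho / 2) y).
  { intro i; rewrite Hdiff.
    assert (Rabs (g y i) <= G').
    { apply Hbound'; apply (in_box_weaken _ _ r'); auto; lra. }
    assert (Rabs (g x i) <= G) by (apply Hbound, Hx2).
    assert (Rabs (g y i - g x i) <= G' + G).
    { unfold Rminus; eapply Rle_trans; [apply Rabs_triang|]; rewrite Rabs_Ropp; lra. }
    assert (u * Rabs (g y i - g x i) <= u * (G' + G)) by (apply Rmult_le_compat_l; lra).
    lra. }
  assert (Hy2 : in_box x0 (2 * rho) y).
  { apply (in_box_weaken _ _ (r + rho / 2)); [lra|]; apply (in_box_trans _ x); auto. }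
  set (D := fin_max (fun i => Rabs (y i - x i))).
  assert (HD : in_box x D y) by (intro i; apply (fin_max_ge (fun i => Rabs (y i - x i)))).
  assert (HD0 : 0 <= D) by apply fin_max_nonneg.
  assert (Hcontr : D <= u * L * D).
  { apply fin_max_le; [apply Rmult_le_pos; [apply Rmult_le_pos|]; lra|].
    intro i; rewrite Hdiff, Rmult_assoc; apply Rmult_le_compat_l; [lra|].
    apply Hlip; auto. }
  assert (HD_zero : D = 0) by nra.
  apply functional_extensionality; intro i.
  pose proof (proj1 (Rabs_le_iff _ _) (HD i)) as Hi; rewrite HD_zero in Hi; lra.
Qed.

Theorem lemma6p1 (a b : option R) (n : nat) (g : vec n -> vec n) :
  ext_pos a -> ext_pos b -> (1 <= n)%nat -> C1_vec g ->
  exists W : (R * vec n)%type -> Prop,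
    open_RxRn W /\
    (forall p, W p -> in_interval a b (fst p)) /\
    (forall (u : R) (x : vec n), in_interval a b u -> u <= 0 -> W (u, x)) /\
    (forall p q, W p -> W q -> Fmap g p = Fmap g q -> p = q).
Proof.
  intros _ _ _ HC.
  exists (fun p => in_interval a b (fst p) /\
                   exists x0 r rho L G, chart g (fst p) (snd p) x0 r rho L G).
  split; [|split; [|split]].
  - intros [u x] [Hint [x0 [r [rho [L [G Hchart]]]]]]; simpl in *.
    destruct (in_interval_open a b u Hint) as [e1 [He1 H1]].
    destruct (chart_open g u x x0 r rho L G Hchart) as [e2 [He2 H2]].
    exists (Rmin e1 e2); split; [apply Rmin_pos; auto|].
    pose proof (Rmin_l e1 e2); pose proof (Rmin_r e1 e2).
    intros [u' x'] Hu' Hx'; simpl in *; split; [apply H1; lra|].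
    exists x0, ((r + rho) / 2), rho, L, G; apply H2; [lra|].
    intro k; specialize (Hx' k); lra.
  - intros p [Hint _]; exact Hint.
  - intros u x Hint Hu; split; [exact Hint|]; exact (chart_at_nonpos g u x HC Hu).
  - intros [u x] [u' y] [_ [x0 [r [rho [L [G Hx]]]]]] [_ [y0 [r' [rho' [L' [G' Hy]]]]]] HF.
    unfold Fmap in HF; simpl in *; injection HF as <- Heq; f_equal.
    destruct (Rle_dec u 0) as [Hu|Hu].
    + rewrite Rmax_right in Heq by lra.
      apply functional_extensionality; intro i; pose proof (equal_f Heq i); simpl in *; lra.
    + rewrite Rmax_left in Heq by lra.
      pose proof (equal_f Heq) as Heqi; simpl in Heqi.
      destruct (Rle_dec rho' rho).
      * apply (chart_injective g u x y x0 r rho L G y0 r' rho' L' G'); auto; lra.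
      * symmetry; apply (chart_injective g u y x y0 r' rho' L' G' x0 r rho L G); auto; lra.
Qed.
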